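(* Let $A$ be a three-dimensional permutation array of size $n_1\times n_2\times n_1n_2$ (defined by a bijection $\varphi:[n_1]\times[n_2]\to[n_1n_2]$, with $n_1,n_2\ge2$). If any of the following holds: (i) $n_1$ and $n_2$ are both odd; (ii) $n_1$ and $n_2$ are both even and $\max(n_1,n_2)>4$; (iii) one of $n_1,n_2$ is even and greater than $2$ and the other is odd; then there is an $n_1\times n_2\times n_1n_2$ window in the periodic extension of $A$ having a repeated difference vector.
   Context: For $n\in\mathbb{N}$, $[n]=\{1,\dots,n\}$. The array $A:[n_1]\times[n_2]\times[n_1n_2]\to\{0,1\}$ is defined by $A(a_1,a_2,a_3)=1$ iff $\varphi(a_1,a_2)=a_3$; points with value 1 are dots. The periodic extension $\mathbb{A}:\mathbb{Z}^3\to\{0,1\}$ is $\mathbb{A}(a_1,a_2,a_3)=A(a_1',a_2',a_3')$ where $a_i'$ is the representative of $a_i$ modulo the $i$-th side length lying in $\{1,\dots,\text{side length}\}$; an $n_1\times n_2\times n_1n_2$ window is the restriction of $\mathbb{A}$ to a box $\{k_1,\dots,k_1+n_1-1\}\times\{k_2,\dots,k_2+n_2-1\}\times\{k_3,\dots,k_3+n_1n_2-1\}$. The difference vector from dot $(a_i)$ to a distinct dot $(w_i)$ is $\langle w_1-a_1,w_2-a_2,w_3-a_3\rangle$; a window has a repeated difference vector if two distinct ordered pairs of distinct dots in it have equal difference vectors. *)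

From mathcomp Require Import all_boot all_order all_algebra.
Set Implicit Arguments. Unset Strict Implicit. Unset Printing Implicit Defensive.
Import Order.TTheory GRing.Theory Num.Theory.
Local Open Scope ring_scope.

(* Indexing convention: an ordinal i : 'I_n stands for the element i+1 of [n].
   So phi : 'I_n1 * 'I_n2 -> 'I_(n1*n2) encodes the bijection
   varphi : [n1] x [n2] -> [n1 n2] via varphi(i+1,j+1) = phi(i,j)+1. *)

Definition point := (int * int * int)%type.

(* The representative of a modulo n lying in {1,...,n} is ((a-1) mod n) + 1;
   as an ordinal index it is (a-1) mod n.  A point of Z^3 is a dot of the
   periodic extension iff A at the representatives equals 1, i.e.
   varphi(a1', a2') = a3'. *)
Definition is_dot (n1 n2 : nat) (phi : 'I_n1 * 'I_n2 -> 'I_(n1 * n2))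
  (p : point) : bool :=
  let: (a1, a2, a3) := p in
  [exists i : 'I_n1, exists j : 'I_n2,
     [&& ((a1 - 1) %% n1)%Z == (nat_of_ord i)%:Z,
         ((a2 - 1) %% n2)%Z == (nat_of_ord j)%:Z &
         ((a3 - 1) %% (n1 * n2)%N)%Z == (nat_of_ord (phi (i, j)))%:Z]].

Definition in_window (n1 n2 : nat) (k : point) (p : point) : bool :=
  let: (k1, k2, k3) := k in
  let: (a1, a2, a3) := p in
  [&& k1 <= a1 <= k1 + n1%:Z - 1,
      k2 <= a2 <= k2 + n2%:Z - 1 &
      k3 <= a3 <= k3 + (n1 * n2)%N%:Z - 1].

Definition diff_vec (p q : point) : point :=
  let: (a1, a2, a3) := p in
  let: (w1, w2, w3) := q in (w1 - a1, w2 - a2, w3 - a3).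

Definition window_dot (n1 n2 : nat) (phi : 'I_n1 * 'I_n2 -> 'I_(n1 * n2)) (k p : point) : bool :=
  in_window n1 n2 k p && is_dot phi p.

Definition has_repeated_diff n1 n2 (phi : 'I_n1 * 'I_n2 -> 'I_(n1 * n2))
  (k : point) : Prop :=
  exists p q r s : point,
    [/\ window_dot phi k p, window_dot phi k q,
        window_dot phi k r, window_dot phi k s &
        [/\ p != q, r != s, (p, q) != (r, s) & diff_vec p q = diff_vec r s]].

From mathcomp Require Import all_boot all_order all_algebra zify.
Set Implicit Arguments. Unset Strict Implicit. Unset Printing Implicit Defensive.
Import Order.TTheory GRing.Theory Num.Theory.
Local Open Scope ring_scope.

(* Translate the cells of [n1] x [n2] by a fixed step (d1, d2) of order > 2 modulo
   (n1, n2), e.g. (1, 0) when n1 >= 3.  The dot over a cell x and the dot over its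
   translate differ by (d1, d2, delta x) with delta x in {1, ..., n1 n2 - 1}, so by
   pigeonhole two distinct cells x, y share the same delta.  In each coordinate the two
   pairs of residues can then be lifted, with a common difference, into one interval of
   length the period, unless the step is half the period and the pairs interleave; in
   the third coordinate that would make the translation swap x and y, which its order
   excludes.  The four lifts lie in one window and have a repeated difference vector. *)

Lemma eqz_modP (n a b : int) : reflect (exists c, a = b + c * n) (a == b %[mod n])%Z.
Proof.
rewrite eqz_mod_dvd; apply: (iffP dvdzP) => -[c hc]; exists c; lia.
Qed.

Lemma eqz_mod_addl (n a b c : int) : (b = c %[mod n])%Z -> (a + b = a + c %[mod n])%Z.
Proof. by move=> eq_bc; rewrite -modzDmr eq_bc modzDmr. Qed.

Lemma modz_addr_small (n a c : int) : 0 <= c < 2 * n -> (a + c = a %[mod n])%Z -> c = 0 \/ c = n.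
Proof.
move=> c_range /eqP/eqz_modP[m c_eq].
have n_gt0 : 0 < n by lia.
have [m0|m1] : m = 0 \/ m = 1 by nia.
all: subst m; lia.
Qed.

Lemma ord_int_range n (i : 'I_n) : 0 <= i%:Z < n%:Z.
Proof. by rewrite ltz_nat ltn_ord. Qed.

Lemma ord_eqmodz n (i j : 'I_n) : (i%:Z = j %[mod n])%Z -> i = j.
Proof.
by rewrite !modz_small ?ord_int_range // => /eqP; rewrite eqz_nat => /eqP/ord_inj.
Qed.

Lemma ordS_eqmodz n (i : 'I_n) : ((ordS i)%:Z = i%:Z + 1 %[mod n])%Z.
Proof. by rewrite /= -modz_nat modz_mod -addn1 PoszD. Qed.

Lemma pigeonhole_nat (T : finType) (f : T -> nat) (m : nat) :
  (forall x, f x < m)%N -> (m < #|T|)%N -> exists x, exists2 y, x != y & f x = f y.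
Proof.
move=> f_lt lt_m.
have /injectivePn[x [y neq_xy /(congr1 val) eq_fxy]] : ~~ injectiveb (fun x => Ordinal (f_lt x)).
  by apply/negP => /injectiveP/leq_card; rewrite card_ord leqNgt lt_m.
by exists x; exists y.
Qed.

Lemma cyclic_window_fit (n u v d : int) :
  0 <= u < n -> 0 <= v < n -> 0 <= d < n -> ~ (2 * d = n /\ `|v - u| = d) ->
  exists k p q s : int,
    [/\ (p = u %[mod n])%Z, (q = v %[mod n])%Z, (s = d %[mod n])%Z &
        [/\ k <= p <= k + n - 1, k <= p + s <= k + n - 1,
            k <= q <= k + n - 1 & k <= q + s <= k + n - 1]].
Proof.
move=> hu hv hd hnot.
suff [k [a [b [c fit]]]] : exists k a b c : int,
    let p := u + a * n in let q := v + b * n in let s := d - c * n in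
    [/\ k <= p <= k + n - 1, k <= p + s <= k + n - 1,
        k <= q <= k + n - 1 & k <= q + s <= k + n - 1].
  exists k, (u + a * n), (v + b * n), (d - c * n).
  by split=> //; rewrite -?mulNr addrC modzMDl.
wlog le_uv : u v hu hv hnot / u <= v.
  move=> wlog_fit; case: (lerP u v) => [|lt_vu]; first exact: wlog_fit.
  have [k [a [b [c fit]]]] := wlog_fit v u hv hu ltac:(lia) (ltW lt_vu).
  by exists k, b, a, c; case: fit.
(* The window starts at u or at v (lifting u by n), lowered by n - d when the step
   wraps around; what remains is v - u = d = n - d, the excluded case. *)
have [|] := lerP (v - u) (n - 1 - d).
  by exists u, 0, 0, 0; split; lia.
have [|] := lerP (v - u) (d - 1).
  by exists (u + d - n), 0, 0, 1; split; lia.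
have [|] := lerP (d + 1) (v - u).
  by exists v, 1, 0, 0; split; lia.
have [|] := lerP (n - d + 1) (v - u).
  by exists (v + d - n), 1, 0, 1; split; lia.
lia.
Qed.

Section Dots.

Variables (n1 n2 : nat) (phi : 'I_n1 * 'I_n2 -> 'I_(n1 * n2)).

Definition lies_over (x : 'I_n1 * 'I_n2) (p : point) : Prop :=
  let: (a1, a2, a3) := p in
  [/\ (a1 - 1 = x.1%:Z %[mod n1])%Z, (a2 - 1 = x.2%:Z %[mod n2])%Z
    & (a3 - 1 = (phi x)%:Z %[mod n1 * n2])%Z].

Lemma lies_over_dot x p : lies_over x p -> is_dot phi p.
Proof.
case: p => [[a1 a2] a3] [h1 h2 h3]; apply/existsP; exists x.1; apply/existsP; exists x.2.
by rewrite -surjective_pairing h1 h2 h3 !modz_small ?eqxx ?ltz_nat ?ltn_ord.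
Qed.

Lemma lies_over_inj x y p : lies_over x p -> lies_over y p -> x = y.
Proof.
case: p => [[a1 a2] a3] [hx1 hx2 _] [hy1 hy2 _].
rewrite [x]surjective_pairing [y]surjective_pairing.
by congr pair; apply: ord_eqmodz; rewrite -?hx1 -?hx2.
Qed.

Lemma lies_over_translate (x x' : 'I_n1 * 'I_n2) (a1 a2 a3 s1 s2 s3 : int) :
  lies_over x (a1, a2, a3) ->
  (x'.1%:Z = x.1%:Z + s1 %[mod n1])%Z -> (x'.2%:Z = x.2%:Z + s2 %[mod n2])%Z ->
  ((phi x')%:Z = (phi x)%:Z + s3 %[mod n1 * n2])%Z ->
  lies_over x' (a1 + s1, a2 + s2, a3 + s3).
Proof.
move=> [h1 h2 h3] e1 e2 e3.
by split; rewrite addrAC -modzDml ?h1 ?h2 ?h3 modzDml.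
Qed.

Lemma repeated_diff_of_lies_over (x x' y y' : 'I_n1 * 'I_n2) (k p p' q q' : point) :
  x' != x -> y' != y -> x != y ->
  lies_over x p -> lies_over x' p' -> lies_over y q -> lies_over y' q' ->
  [/\ in_window n1 n2 k p, in_window n1 n2 k p', in_window n1 n2 k q & in_window n1 n2 k q'] ->
  diff_vec p p' = diff_vec q q' -> has_repeated_diff phi k.
Proof.
move=> neq_x'x neq_y'y neq_xy hp hp' hq hq' [wp wp' wq wq'] eq_diff.
exists p, p', q, q'; split; last split=> //; rewrite /window_dot.
- by rewrite wp (lies_over_dot hp).
- by rewrite wp' (lies_over_dot hp').
- by rewrite wq (lies_over_dot hq).
- by rewrite wq' (lies_over_dot hq').
all: apply/eqP.
- by move=> eq_pp'; case/eqP: neq_x'x; apply: lies_over_inj hp' _; rewrite -eq_pp'.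
- by move=> eq_qq'; case/eqP: neq_y'y; apply: lies_over_inj hq' _; rewrite -eq_qq'.
- by move=> [eq_pq _]; case/eqP: neq_xy; apply: lies_over_inj hp _; rewrite eq_pq.
Qed.

End Dots.

Section Translation.

Variables (n1 n2 : nat) (phi : 'I_n1 * 'I_n2 -> 'I_(n1 * n2)).
Hypothesis phi_inj : injective phi.

Variables (e : 'I_n1 * 'I_n2 -> 'I_n1 * 'I_n2) (d1 d2 : int).
Hypothesis e_step1 : forall x, ((e x).1%:Z = x.1%:Z + d1 %[mod n1])%Z.
Hypothesis e_step2 : forall x, ((e x).2%:Z = x.2%:Z + d2 %[mod n2])%Z.
Hypotheses (d1_range : 0 <= d1 < n1) (d2_range : 0 <= d2 < n2).
Hypotheses (d1_not_half : 2 * d1 != n1) (d2_not_half : 2 * d2 != n2).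
Hypothesis d_neq0 : (d1 != 0) || (d2 != 0).

Local Notation N := (n1 * n2)%N%:Z.

Lemma translation_fixfree x : e x != x.
Proof.
apply/eqP => ex_x; move: d_neq0.
have -> : d1 = 0 by have := e_step1 x; rewrite ex_x => /esym/modz_addr_small; lia.
suff -> : d2 = 0 by [].
by have := e_step2 x; rewrite ex_x => /esym/modz_addr_small; lia.
Qed.

Lemma translation2_fixfree x : e (e x) != x.
Proof.
apply/eqP => eex_x; move: d_neq0.
have -> : d1 = 0.
  have := e_step1 (e x); rewrite eex_x -modzDml e_step1 modzDml -addrA.
  by move=> /esym/modz_addr_small; move/eqP: d1_not_half; lia.
suff -> : d2 = 0 by [].
have := e_step2 (e x); rewrite eex_x -modzDml e_step2 modzDml -addrA.
by move=> /esym/modz_addr_small; move/eqP: d2_not_half; lia.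
Qed.

Definition phi_step x : int := (((phi (e x))%:Z - (phi x)%:Z) %% N)%Z.

Lemma phi_translate x : ((phi (e x))%:Z = (phi x)%:Z + phi_step x %[mod N])%Z.
Proof. by rewrite modzDmr addrC subrK. Qed.

Lemma phi_step_range x : 1 <= phi_step x <= N - 1.
Proof.
have N_gt0 : 0 < N by have := ord_int_range (phi x); lia.
have ge0 : 0 <= phi_step x by rewrite modz_ge0 ?gt_eqF.
have ltN : phi_step x < N by rewrite ltz_pmod.
suff : phi_step x != 0 by lia.
apply: contra (translation_fixfree x) => /eqP step0; apply/eqP/phi_inj/ord_eqmodz.
by rewrite phi_translate step0 addr0.
Qed.

Lemma exists_eq_phi_step : exists x, exists2 y, x != y & phi_step x = phi_step y.
Proof.
have step_lt x : ((absz (phi_step x)).-1 < (n1 * n2).-1)%N by have := phi_step_range x; lia.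
have [|x [y neq_xy eq_step]] := pigeonhole_nat step_lt.
  by rewrite card_prod !card_ord; move: d1_range d2_range; nia.
by exists x; exists y => //; have := phi_step_range x; have := phi_step_range y; lia.
Qed.

Lemma phi_step_not_half x y : phi_step x = phi_step y ->
  ~ (2 * phi_step x = N /\ `|(phi y)%:Z - (phi x)%:Z| = phi_step x).
Proof.
move=> eq_step [half_N dist].
have involutive z w : phi_step z = phi_step x -> phi_step w = phi_step x ->
    (phi w)%:Z - (phi z)%:Z = phi_step x -> e (e z) = z.
  move=> step_z step_w gap_zw.
  have ez_w : e z = w.
    by apply/phi_inj/ord_eqmodz; rewrite phi_translate step_z -gap_zw addrC subrK.
  apply/phi_inj/ord_eqmodz; rewrite ez_w phi_translate step_w.
  have -> : (phi w)%:Z + phi_step x = (phi z)%:Z + N by lia.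
  by rewrite modzDr.
case: (lerP (phi x)%:Z (phi y)%:Z) => [le_xy|lt_yx].
- by move/eqP: (translation2_fixfree x); apply; apply: (involutive x y) => //; lia.
- by move/eqP: (translation2_fixfree y); apply; apply: (involutive y x) => //; lia.
Qed.

Lemma repeated_diff_of_translation : exists k, has_repeated_diff phi k.
Proof.
have [x [y neq_xy eq_step]] := exists_eq_phi_step.
have not_half1 : ~ (2 * d1 = n1 /\ `|y.1%:Z - x.1%:Z| = d1).
  by case=> /eqP; rewrite (negbTE d1_not_half).
have not_half2 : ~ (2 * d2 = n2 /\ `|y.2%:Z - x.2%:Z| = d2).
  by case=> /eqP; rewrite (negbTE d2_not_half).
have step_range : 0 <= phi_step x < N by have := phi_step_range x; lia.
have [k1 [p1 [q1 [s1 [hp1 hq1 hs1 w1]]]]] :=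
  cyclic_window_fit (ord_int_range x.1) (ord_int_range y.1) d1_range not_half1.
have [k2 [p2 [q2 [s2 [hp2 hq2 hs2 w2]]]]] :=
  cyclic_window_fit (ord_int_range x.2) (ord_int_range y.2) d2_range not_half2.
have [k3 [p3 [q3 [s3 [hp3 hq3 hs3 w3]]]]] :=
  cyclic_window_fit (ord_int_range (phi x)) (ord_int_range (phi y)) step_range
    (phi_step_not_half eq_step).
have over_x : lies_over phi x (p1 + 1, p2 + 1, p3 + 1) by split; rewrite addrK.
have over_y : lies_over phi y (q1 + 1, q2 + 1, q3 + 1) by split; rewrite addrK.
have over_e z (a b c : int) : phi_step z = phi_step x ->
    lies_over phi z (a, b, c) -> lies_over phi (e z) (a + s1, b + s2, c + s3).
  move=> step_z over_z; apply: lies_over_translate over_z _ _ _;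
    rewrite ?e_step1 ?e_step2 ?phi_translate ?step_z; apply: eqz_mod_addl.
  - by rewrite hs1.
  - by rewrite hs2.
  - by rewrite hs3.
exists (k1 + 1, k2 + 1, k3 + 1).
apply: (repeated_diff_of_lies_over (translation_fixfree x) (translation_fixfree y) neq_xy
  over_x (over_e x _ _ _ erefl over_x) over_y (over_e y _ _ _ (esym eq_step) over_y)).
- rewrite /in_window; case: w1; case: w2; case: w3; split; lia.
- by rewrite /diff_vec; congr (_, _, _); lia.
Qed.

End Translation.

Theorem mainTheorem11 (n1 n2 : nat)
  (phi : 'I_n1 * 'I_n2 -> 'I_(n1 * n2)) :
  bijective phi -> (2 <= n1)%N -> (2 <= n2)%N ->
  [|| odd n1 && odd n2,
      [&& ~~ odd n1, ~~ odd n2 & (4 < maxn n1 n2)%N] |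
      [&& ~~ odd n1, (2 < n1)%N & odd n2] || [&& ~~ odd n2, (2 < n2)%N & odd n1]] ->
  exists k : point, has_repeated_diff phi k.
Proof.
move=> /bij_inj phi_inj n1_ge2 n2_ge2 cases.
have [n1_gt2|n1_le2] := ltnP 2 n1.
  apply: (@repeated_diff_of_translation _ _ _ phi_inj (fun x => (ordS x.1, x.2)) 1 0) => //; try lia.
  - by move=> x; apply: ordS_eqmodz.
  - by move=> x; rewrite addr0.
have n2_gt2 : (2 < n2)%N.
  have n1_eq2 : n1 = 2 by lia.
  by move: cases; rewrite n1_eq2 /= => /orP[/andP[_]|/and3P[]]; lia.
apply: (@repeated_diff_of_translation _ _ _ phi_inj (fun x => (x.1, ordS x.2)) 0 1) => //; try lia.
- by move=> x; rewrite addr0.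
- by move=> x; apply: ordS_eqmodz.
Qed.
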